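(* Let $a,d\in\mathbb{N}$ and $m,n\in\mathbb{N}$ with $m,n\ge 2$. Let $X_1,\dots,X_m$ be i.i.d. random variables uniformly distributed on $\{1,\dots,a\}$ and $Y_1,\dots,Y_n$ i.i.d. random variables uniformly distributed on $\{1,\dots,d\}$, independent of the $X_i$. Let $X^{(1)}\ge X^{(2)}$ be the largest and second largest values among $X_1,\dots,X_m$ (counted with multiplicity), and similarly $Y^{(1)}\ge Y^{(2)}$ among $Y_1,\dots,Y_n$. Then \begin{align*} \Pr\left(X^{(1)}>Y^{(1)}\text{ and }X^{(2)}>Y^{(2)}\right) &= \sum_{y_1=2}^{\min \{a,d\} } \sum_{y_2=1}^{y_{1}-1} \frac{n\big(y_2^{n-1}-(y_2-1)^{n-1}\big)\big(a^m-y_1^m-m(a-y_1)y_2^{m-1}\big)}{a^m d^n} \\ & \quad + \sum_{y_{1}=1}^{\min\{a,d\}}\frac{\big( y_1^n-(y_1-1)^{n}-n(y_1-1)^{n-1} \big) \big(a^m+(m-1)y_1^m-am\,y_1^{m-1} \big)}{a^m d^n}. \end{align*}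
   Context: $X^{(i)}$ denotes the $i$-th largest of the dice values (order statistics, so if the two largest values are equal then $X^{(1)}=X^{(2)}$). In the paper's notation the event is $\{X_i\}_m>_{2,2}\{Y_j\}_n$: both of the comparisons $X^{(1)}>Y^{(1)}$, $X^{(2)}>Y^{(2)}$ hold (ties go to the defender). *)

From mathcomp Require Import all_boot all_order all_algebra.
Set Implicit Arguments. Unset Strict Implicit. Unset Printing Implicit Defensive.
Import Order.TTheory GRing.Theory Num.Theory.

(* A die with [a] faces: outcome [i : 'I_a] shows the value [i.+1] in {1,...,a}. *)
Definition dieval (a : nat) (i : 'I_a) : nat := i.+1.

Definition dice_values (m a : nat) (x : {ffun 'I_m -> 'I_a}) : seq nat :=
  [seq dieval (x i) | i <- enum 'I_m].

(* k-th largest value (0-indexed: k = 0 is the largest), counted with multiplicity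
   (order statistics: sort in nonincreasing order). *)
Definition kth_largest (s : seq nat) (k : nat) : nat := nth 0 (sort geq s) k.

Definition beats22 (m n a d : nat) (x : {ffun 'I_m -> 'I_a}) (y : {ffun 'I_n -> 'I_d}) : bool :=
  (kth_largest (dice_values y) 0 < kth_largest (dice_values x) 0) &&
  (kth_largest (dice_values y) 1 < kth_largest (dice_values x) 1).

Definition prob22 (m n a d : nat) : rat :=
  \sum_(x : {ffun 'I_m -> 'I_a}) \sum_(y : {ffun 'I_n -> 'I_d})
     ((\prod_(i < m) (a%:R)^-1) * (\prod_(j < n) (d%:R)^-1) * (beats22 x y)%:R).

From mathcomp Require Import all_boot all_order all_algebra.
From mathcomp Require Import zify ring.
Import Order.TTheory GRing.Theory Num.Theory.
Set Implicit Arguments. Unset Strict Implicit.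

(* Condition on the defender's top two values (u, v), with v <= u.  The attacker
   wins iff some die exceeds u and two dice exceed v; the complementary rolls are
   those with no die above u (u^m of them) and those with exactly one die above v,
   lying in (u, a] (m (a - u) v^(m-1) of them).  The same complement count gives the
   joint distribution function #{Y1 <= al, Y2 <= be} = be^n + n (al - be) be^(n-1),
   and inclusion-exclusion turns it into the number of defender rolls with top two
   values exactly (u, v).  Throughout, order statistics are read through counts:
   the k-th largest value exceeds t iff more than k values exceed t. *)


Definition dice_sum (m A : nat) (f : seq nat -> nat) : nat :=
  \sum_(x : {ffun 'I_m -> 'I_A}) f (dice_values x).

Section DiceSum.

Variable A : nat.

Lemma dice_sum0 f : dice_sum 0 A f = f [::].
Proof.
rewrite /dice_sum (eq_bigr (fun _ => f [::])); last first.
  by move=> x _; rewrite /dice_values enum_ord0.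
by rewrite sum_nat_const card_ffun !card_ord expn0 mul1n.
Qed.

Definition ffcons m (c : 'I_A) (t : {ffun 'I_m -> 'I_A}) : {ffun 'I_m.+1 -> 'I_A} :=
  [ffun i => if unlift ord0 i is Some j then t j else c].

Lemma dice_values_ffcons m (c : 'I_A) (t : {ffun 'I_m -> 'I_A}) :
  dice_values (ffcons c t) = c.+1 :: dice_values t.
Proof.
rewrite /dice_values enum_ordSl /= ffunE unlift_none -map_comp; congr (_ :: _).
by apply: eq_map => j /=; rewrite ffunE liftK.
Qed.

Lemma dice_sumS m f :
  dice_sum m.+1 A f = \sum_(c < A) dice_sum m A (fun s => f (c.+1 :: s)).
Proof.
rewrite /dice_sum pair_big /=.
rewrite (reindex (fun p : 'I_A * {ffun 'I_m -> 'I_A} => ffcons p.1 p.2)) /=.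
  by apply: eq_bigr => p _; rewrite dice_values_ffcons.
exists (fun x => (x ord0, [ffun j => x (lift ord0 j)])) => [[c t] _ | x _].
  rewrite /ffcons /= ffunE unlift_none; congr (_, _).
  by apply/ffunP => j; rewrite !ffunE liftK.
by apply/ffunP => i; rewrite /ffcons ffunE /=; case: unliftP => [j ->|->]; rewrite ?ffunE.
Qed.

Variable m : nat.

Lemma eq_dice_sum f g :
  (forall x : {ffun 'I_m -> 'I_A}, f (dice_values x) = g (dice_values x)) ->
  dice_sum m A f = dice_sum m A g.
Proof. by move=> fg; apply: eq_bigr => x _. Qed.

Lemma dice_sumD f g :
  dice_sum m A (fun s => f s + g s) = dice_sum m A f + dice_sum m A g.
Proof. exact: big_split. Qed.

Lemma dice_sumMl k f : dice_sum m A (fun s => k * f s) = k * dice_sum m A f.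
Proof. by rewrite /dice_sum big_distrr. Qed.

End DiceSum.

Definition count_gt (t : nat) (s : seq nat) : nat := count (fun z => t < z) s.

Lemma count_gt_cons t z s : count_gt t (z :: s) = (t < z) + count_gt t s.
Proof. by []. Qed.

Lemma count_gt_anti t t' s : t <= t' -> count_gt t' s <= count_gt t s.
Proof. by move=> tt'; apply: sub_count => z /=; apply: leq_ltn_trans. Qed.

Lemma sorted_geq_nth_gt (r : seq nat) t k : sorted geq r ->
  (t < nth 0 r k) = (k < count_gt t r).
Proof.
elim: r k => [|z r IH] k /= r_sorted; first by rewrite nth_nil; case: k.
have r_le_z : all (geq z) r.
  by apply: order_path_min r_sorted => x y w /= yx wy; apply: leq_trans wy yx.
case: (ltnP t z) => [tz | zt].
  by case: k => [|k] /=; rewrite ?tz // IH ?(path_sorted r_sorted).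
have -> : count_gt t r = 0.
  apply/eqP; rewrite -leqn0 leqNgt -has_count; apply/hasPn => y /(allP r_le_z) yz.
  by rewrite -leqNgt (leq_trans yz).
rewrite addn0 ltn0; apply/negbTE; rewrite -leqNgt.
case: k => [|k] //=; case: (ltnP k (size r)) => [kr | rk]; last by rewrite nth_default.
exact: leq_trans (allP r_le_z _ (mem_nth 0 kr)) zt.
Qed.

Lemma kth_largest_gt s t k : (t < kth_largest s k) = (k < count_gt t s).
Proof.
rewrite /kth_largest sorted_geq_nth_gt; last by apply: sort_sorted => x y; apply: leq_total.
by rewrite /count_gt (permP (permEl (perm_sort geq s))).
Qed.

Lemma kth_largest_le s t k : (kth_largest s k <= t) = (count_gt t s <= k).
Proof. by rewrite leqNgt kth_largest_gt -leqNgt. Qed.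

Lemma kth_largest_geS s k : kth_largest s k.+1 <= kth_largest s k.
Proof.
rewrite leqNgt kth_largest_gt; apply/negP => lt_k1.
by have := ltnW lt_k1; rewrite -kth_largest_gt ltnn.
Qed.

Section DiceValues.

Variables m A : nat.
Implicit Type x : {ffun 'I_m -> 'I_A}.

Lemma count_gt_dice_max x : count_gt A (dice_values x) = 0.
Proof.
apply/eqP; rewrite -leqn0 leqNgt -has_count; apply/hasPn => z /mapP[i _ ->].
by rewrite -leqNgt /dieval.
Qed.

Lemma count_gt0_dice x : count_gt 0 (dice_values x) = m.
Proof.
rewrite /count_gt (eq_in_count (a2 := predT)) ?count_predT ?size_map.
  by rewrite -enumT -cardT card_ord.
by move=> z /mapP[i _ ->].
Qed.

Lemma kth_largest0_dice_le x : kth_largest (dice_values x) 0 <= A.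
Proof. by rewrite kth_largest_le count_gt_dice_max. Qed.

Lemma kth_largest_dice_gt0 x k : k < m -> 0 < kth_largest (dice_values x) k.
Proof. by rewrite kth_largest_gt count_gt0_dice. Qed.

End DiceValues.

Lemma sum_ord_in_range A u w :
  \sum_(c < A) ((u <= c) && (c < w)) = minn A w - minn A u.
Proof.
elim: A => [|A IH]; first by rewrite big_ord0; lia.
by rewrite big_ord_recr /= IH; case: (leqP u A); case: (ltnP A w) => /=; lia.
Qed.

Lemma dice_sum_none_above A w m : w <= A ->
  dice_sum m A (fun s => count_gt w s == 0) = w ^ m.
Proof.
move=> le_wA; elim: m => [|m IH]; first by rewrite dice_sum0.
rewrite dice_sumS (eq_bigr (fun c : 'I_A => ((0 <= c) && (c < w)) * w ^ m)).
  by rewrite -big_distrl sum_ord_in_range /= expnS; lia.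
move=> c _; rewrite -IH -dice_sumMl; apply: eq_dice_sum => x.
by rewrite count_gt_cons; case: (ltnP c w) => /=; lia.
Qed.

Lemma dice_sum_one_above A m v u w : v <= u -> u <= w -> w <= A ->
  dice_sum m A (fun s => [&& count_gt v s == 1, count_gt u s == 1 & count_gt w s == 0])
  = m * (w - u) * v ^ m.-1.
Proof.
move=> le_vu le_uw le_wA; elim: m => [|m IH]; first by rewrite dice_sum0.
rewrite dice_sumS (eq_bigr (fun c : 'I_A =>
  ((0 <= c) && (c < v)) * (m * (w - u) * v ^ m.-1) + ((u <= c) && (c < w)) * v ^ m)).
  rewrite big_split -!big_distrl !sum_ord_in_range /=.
  by case: m {IH} => [|m] /=; rewrite ?expnS; lia.
move=> c _; rewrite -IH -(@dice_sum_none_above A v m) -?dice_sumMl -?dice_sumD; last lia.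
apply: eq_dice_sum => x; rewrite !count_gt_cons.
have := count_gt_anti (dice_values x) le_vu; have := count_gt_anti (dice_values x) le_uw.
by case: (ltnP c v); case: (leqP u c); case: (ltnP c w) => /=; lia.
Qed.

Definition beat_count m A u v : nat :=
  dice_sum m A (fun s => (0 < count_gt u s) && (1 < count_gt v s)).

Lemma beat_count_compl m A u v : v <= u -> u <= A ->
  beat_count m A u v + u ^ m + m * (A - u) * v ^ m.-1 = A ^ m.
Proof.
move=> le_vu le_uA.
rewrite -(dice_sum_none_above m le_uA) -(dice_sum_one_above m le_vu le_uA (leqnn A)).
rewrite -(dice_sum_none_above m (leqnn A)) /beat_count -!dice_sumD.
apply: eq_dice_sum => x; rewrite count_gt_dice_max.
by have := count_gt_anti (dice_values x) le_vu; lia.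
Qed.

Lemma beat_count_eq0 m A u v : A < u -> beat_count m A u v = 0.
Proof.
move=> lt_Au; apply: big1 => x _.
have := count_gt_anti (dice_values x) (ltnW lt_Au).
by rewrite count_gt_dice_max leqn0 => /eqP ->.
Qed.

Definition top2_cdf n D al be : nat :=
  dice_sum n D (fun s => (kth_largest s 0 <= al) && (kth_largest s 1 <= be)).

Definition top2_pmf n D u v : nat :=
  dice_sum n D (fun s => (kth_largest s 0 == u) && (kth_largest s 1 == v)).

Lemma top2_cdfE n D al be : be <= al -> al <= D ->
  top2_cdf n D al be = be ^ n + n * (al - be) * be ^ n.-1.
Proof.
move=> le_ba le_aD.
rewrite -(dice_sum_none_above n (leq_trans le_ba le_aD)).
rewrite -(dice_sum_one_above n (leqnn be) le_ba le_aD) -dice_sumD.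
apply: eq_dice_sum => x; rewrite !kth_largest_le.
by have := count_gt_anti (dice_values x) le_ba; lia.
Qed.

Lemma top2_pmf_incl_excl n D u v :
  top2_pmf n D u.+1 v.+1 + top2_cdf n D u v.+1 + top2_cdf n D u.+1 v
  = top2_cdf n D u.+1 v.+1 + top2_cdf n D u v.
Proof. by rewrite -!dice_sumD; apply: eq_dice_sum => x; lia. Qed.

Lemma top2_pmf_diag n D u :
  top2_pmf n D u.+1 u.+1 + top2_cdf n D u.+1 u = top2_cdf n D u.+1 u.+1.
Proof.
rewrite -dice_sumD; apply: eq_dice_sum => x.
by have := kth_largest_geS (dice_values x) 0; lia.
Qed.

Local Open Scope ring_scope.

Lemma beat_countE m A u v : (v <= u)%N -> (u <= A)%N ->
  (beat_count m A u v)%:R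
  = A%:R ^+ m - u%:R ^+ m - m%:R * (A%:R - u%:R) * v%:R ^+ m.-1 :> rat.
Proof.
move=> le_vu le_uA; rewrite -[A%:R ^+ m]natrX -(beat_count_compl m le_vu le_uA).
by rewrite !natrD !natrM natrB // !natrX; ring.
Qed.

Lemma top2_pmf_ltE n D u v : (0 < v < u)%N -> (u <= D)%N ->
  (top2_pmf n D u v)%:R = n%:R * (v%:R ^+ n.-1 - (v%:R - 1) ^+ n.-1) :> rat.
Proof.
case: u v => [|u] [|v] // /andP[_ lt_vu] le_uD.
have -> : (top2_pmf n D u.+1 v.+1)%:R = (top2_cdf n D u.+1 v.+1)%:R
    + (top2_cdf n D u v)%:R - (top2_cdf n D u v.+1)%:R - (top2_cdf n D u.+1 v)%:R :> rat.
  by rewrite -natrD -(top2_pmf_incl_excl n D u v) !natrD; ring.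
rewrite !top2_cdfE; try lia.
have -> : v.+1%:R - 1 = v%:R :> rat by rewrite -natr1 addrK.
by rewrite -!natrX !natrD !natrM !natrB -?natr1; [ring | lia..].
Qed.

Lemma top2_pmf_diagE n D u : (0 < u <= D)%N ->
  (top2_pmf n D u u)%:R
  = u%:R ^+ n - (u%:R - 1) ^+ n - n%:R * (u%:R - 1) ^+ n.-1 :> rat.
Proof.
case: u => [|u] // /andP[_ le_uD].
have -> : (top2_pmf n D u.+1 u.+1)%:R
    = (top2_cdf n D u.+1 u.+1)%:R - (top2_cdf n D u.+1 u)%:R :> rat.
  by rewrite -(top2_pmf_diag n D u) natrD; ring.
rewrite !top2_cdfE; try lia.
have -> : u.+1%:R - 1 = u%:R :> rat by rewrite -natr1 addrK.
by rewrite -!natrX !natrD !natrM !natrB -?natr1; [ring | lia..].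
Qed.

Lemma prob22E m n a d : prob22 m n a d =
  (a%:R ^+ m * d%:R ^+ n)^-1 * \sum_(y : {ffun 'I_n -> 'I_d})
    (beat_count m a (kth_largest (dice_values y) 0) (kth_largest (dice_values y) 1))%:R.
Proof.
rewrite /prob22 !prodr_const !card_ord exchange_big /= mulr_sumr.
apply: eq_bigr => y _; rewrite /beat_count /dice_sum natr_sum mulr_sumr.
by apply: eq_bigr => x _; rewrite /beats22 !kth_largest_gt invfM !exprVn.
Qed.

Lemma sum_nat_pick (R : pzSemiRingType) (F : nat -> R) lo hi k : (lo <= k < hi)%N ->
  \sum_(lo <= i < hi) (k == i)%:R * F i = F k.
Proof.
move=> k_in; rewrite (eq_bigr (fun i => if i == k then F i else 0)) => [|i _].
  by rewrite -big_mkcond big_nat1_eq k_in.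
by rewrite mulr_natl mulrb eq_sym.
Qed.

Lemma sum_over_top2 n d (g : nat -> nat -> rat) : (1 < n)%N ->
  \sum_(y : {ffun 'I_n -> 'I_d})
     g (kth_largest (dice_values y) 0) (kth_largest (dice_values y) 1)
  = \sum_(1 <= u < d.+1) \sum_(1 <= v < u.+1) g u v * (top2_pmf n d u v)%:R.
Proof.
move=> n_gt1; symmetry.
under eq_bigr do under eq_bigr do rewrite /top2_pmf /dice_sum natr_sum mulr_sumr.
under eq_bigr do rewrite exchange_big /=; rewrite exchange_big /=.
apply: eq_bigr => y _.
set p := kth_largest _ 0; set q := kth_largest _ 1.
have q_gt0 : (0 < q)%N by apply: kth_largest_dice_gt0.
have le_qp : (q <= p)%N by apply: kth_largest_geS.
have le_pd : (p <= d)%N by apply: kth_largest0_dice_le.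
transitivity (\sum_(1 <= u < d.+1) (p == u)%:R * \sum_(1 <= v < u.+1) (q == v)%:R * g u v).
  apply: eq_bigr => u _; rewrite mulr_sumr; apply: eq_bigr => v _.
  by rewrite -mulnb natrM; ring.
by rewrite sum_nat_pick ?sum_nat_pick ?q_gt0 ?(leq_trans q_gt0 le_qp).
Qed.

Lemma sum_beat_top2_at m n a d u : (0 < m)%N -> (0 < u)%N -> (u <= minn a d)%N ->
  \sum_(1 <= v < u.+1) (beat_count m a u v)%:R * (top2_pmf n d u v)%:R
  = \sum_(1 <= v < u)
      n%:R * (v%:R ^+ n.-1 - (v%:R - 1) ^+ n.-1)
        * (a%:R ^+ m - u%:R ^+ m - m%:R * (a%:R - u%:R) * v%:R ^+ m.-1)
    + (u%:R ^+ n - (u%:R - 1) ^+ n - n%:R * (u%:R - 1) ^+ n.-1)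
        * (a%:R ^+ m + (m%:R - 1) * u%:R ^+ m - a%:R * m%:R * u%:R ^+ m.-1) :> rat.
Proof.
move=> m_gt0 u_gt0 le_u_min.
have [le_ua le_ud] : (u <= a)%N /\ (u <= d)%N by lia.
rewrite big_nat_recr //=; congr (_ + _).
  apply: eq_big_nat => v /andP[v_gt0 lt_vu].
  by rewrite beat_countE ?top2_pmf_ltE ?v_gt0 ?(ltnW lt_vu) //; ring.
have expr_pred (x : rat) : x ^+ m = x * x ^+ m.-1 by rewrite -exprS prednK.
by rewrite beat_countE ?top2_pmf_diagE ?u_gt0 // !expr_pred; ring.
Qed.

Theorem proposition6p3 (a d m n : nat) (ha : (1 <= a)%N) (hd : (1 <= d)%N)
    (hm : (2 <= m)%N) (hn : (2 <= n)%N) :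
  prob22 m n a d =
    \sum_(2 <= y1 < (minn a d).+1) \sum_(1 <= y2 < y1)
       ((n%:R * ((y2%:R : rat) ^+ n.-1 - (y2%:R - 1) ^+ n.-1)
          * ((a%:R : rat) ^+ m - (y1%:R) ^+ m - m%:R * (a%:R - y1%:R) * (y2%:R) ^+ m.-1))
        / ((a%:R : rat) ^+ m * (d%:R) ^+ n))
  + \sum_(1 <= y1 < (minn a d).+1)
       ((((y1%:R : rat) ^+ n - (y1%:R - 1) ^+ n - n%:R * (y1%:R - 1) ^+ n.-1)
          * ((a%:R : rat) ^+ m + (m%:R - 1) * (y1%:R) ^+ m - a%:R * m%:R * (y1%:R) ^+ m.-1))
        / ((a%:R : rat) ^+ m * (d%:R) ^+ n)).
Proof.
rewrite prob22E (@sum_over_top2 n d (fun u v => (beat_count m a u v)%:R)) //.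
rewrite (@big_cat_nat _ _ _ (minn a d).+1) ?ltnS ?geq_minr //=.
rewrite [X in _ + X]big_nat_cond [X in _ + X]big1 ?addr0; last first.
  move=> u /andP[/andP[lt_min_u lt_ud] _]; apply: big1 => v _.
  by rewrite beat_count_eq0 ?mul0r //; lia.
under eq_big_nat => u /andP[u_gt0 le_u_min] do rewrite sum_beat_top2_at ?(ltnW hm) //.
rewrite big_split (@big_ltn _ _ _ 1); last lia.
rewrite (@big_geq _ _ _ 1 1) //= add0r.
rewrite mulrC mulrDl !mulr_suml; congr (_ + _).
by apply: eq_bigr => u _; rewrite mulr_suml.
Qed.
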